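(* For any CABA framework $F_c$, every constrained instance of a constrained argument in $\mathit{CArg}$ is a constrained argument in $\mathit{CArg}$.
   Context: Conventions. $\mathsf X$: tuple of variables; $\mathsf t$: tuple of terms. A substitution $\vartheta=\{X_1/t_1,\dots,X_n/t_n\}$ maps distinct variables to terms; $e\vartheta$ replaces each $X_i$ by $t_i$; $\{\mathsf X/\mathsf t\}$ maps $\mathsf X$ componentwise to $\mathsf t$. Theory of constraints. $\mathcal{CT}$ is a first-order theory with equality whose atomic formulas form the set $\mathcal C$ of constraints; a finite set $\{c_1,\dots,c_n\}$ is consistent if $\mathcal{CT}\models\exists(c_1\wedge\dots\wedge c_n)$. CABA framework $F_c=\langle\mathcal L_c,\mathcal C,\mathcal R,\mathcal{CT},\mathcal A,\overline{\cdot}\rangle$: $\mathcal L_c$ a set of atoms; $\mathcal C\subseteq\mathcal L_c$ constraints; $\mathcal R$ rules $s_0\leftarrow s_1,\dots,s_m$ ($s_0\in\mathcal L_c\setminus\mathcal C$, $s_i\in\mathcal L_c$) in normalised form $p(\mathsf X_0)\leftarrow C,p_1(\mathsf X_1),\dots,p_m(\mathsf X_m)$; $\mathcal A\subseteq\mathcal L_c\setminus\mathcal C$ nonempty assumptions, not heads of rules; $\overline\cdot:\mathcal A\to\mathcal L_c\setminus\mathcal C$ total with $\overline{p(\mathsf t)}=cp(\mathsf t)$ for a fixed predicate $cp$ per assumption predicate $p$; $\mathcal L_c,\mathcal C,\mathcal A$ predicate closed. Constrained arguments. A tight constrained argument $C\cup A\vdash_R s$ (consistent $C\subseteq\mathcal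 C$, $A\subseteq\mathcal A$, $R\subseteq\mathcal R$, $s\in\mathcal L_c\setminus\mathcal C$) is a finite tree with root $s$, each non-leaf node $p(\mathsf t)$ having as children exactly $s_1\vartheta,\dots,s_m\vartheta$ for exactly one renamed-apart copy $p(\mathsf X)\leftarrow s_1,\dots,s_m$ of a rule of $R$, $\vartheta=\{\mathsf X/\mathsf t\}$ (or true for a fact), each leaf a constraint of $C$, an assumption of $A$ or true; $C,A,R$ exactly those occurring/used. $C'\cup A'\vdash_R s'$ is a constrained argument if there exist a tight constrained argument $C\cup A\vdash_R s$, a substitution $\vartheta$ and $D\subseteq\mathcal C$ with $C'=C\vartheta\cup D$, $A'=A\vartheta$, $s'=s\vartheta$ and $C'$ consistent. $\mathit{CArg}$ is the set of all constrained arguments of $F_c$. $\alpha'=C'\cup A'\vdash_R s'$ is a constrained instance (via $\vartheta$ and $D$) of a constrained argument $\alpha=C\cup A\vdash_R s$ if $\vartheta$ is a substitution, $D\subseteq\mathcal C$, $C'=C\vartheta\cup D$, $A'=A\vartheta$, $s'=s\vartheta$ and $C'$ is consistent. *)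

From Stdlib Require Import List Arith.
Import ListNotations.

Set Implicit Arguments.

Section Syntax.
Variables (F P : Type).

(* Variables are natural numbers (an infinite supply, needed for renaming apart). *)
Inductive term : Type :=
| Var : nat -> term
| Fn : F -> list term -> term.

Definition atom : Type := (P * list term)%type.

Definition subst : Type := list (nat * term).
Definition is_subst (th : subst) : Prop := NoDup (map fst th).

Fixpoint lookup (th : subst) (x : nat) : term :=
  match th with
  | [] => Var x
  | (y, t) :: th' => if Nat.eqb x y then t else lookup th' x
  end.

Fixpoint subst_term (th : subst) (t : term) : term :=
  match t with
  | Var x => lookup th x
  | Fn f ts => Fn f (map (subst_term th) ts)
  end.

Definition subst_atom (th : subst) (a : atom) : atom :=
  (fst a, map (subst_term th) (snd a)).

Fixpoint rename_term (rho : nat -> nat) (t : term) : term :=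
  match t with
  | Var x => Var (rho x)
  | Fn f ts => Fn f (map (rename_term rho) ts)
  end.

Definition rename_atom (rho : nat -> nat) (a : atom) : atom :=
  (fst a, map (rename_term rho) (snd a)).

Fixpoint vars_term (t : term) : list nat :=
  match t with
  | Var x => [x]
  | Fn _ ts => flat_map vars_term ts
  end.

Definition vars_atom (a : atom) : list nat := flat_map vars_term (snd a).

Record rule : Type := mkRule { head : atom ; body : list atom }.

Definition rename_rule (rho : nat -> nat) (r : rule) : rule :=
  mkRule (rename_atom rho (head r)) (map (rename_atom rho) (body r)).

Definition vars_rule (r : rule) : list nat :=
  vars_atom (head r) ++ flat_map vars_atom (body r).

(* First-order formulas over the constraint language (equality is a distinguished
   predicate symbol, interpreted as identity in every structure). *)
Inductive formula : Type :=
| FAtom : atom -> formula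
| FNot : formula -> formula
| FAnd : formula -> formula -> formula
| FEx : nat -> formula -> formula.

Fixpoint fatoms (phi : formula) : list atom :=
  match phi with
  | FAtom a => [a]
  | FNot p => fatoms p
  | FAnd p q => fatoms p ++ fatoms q
  | FEx _ p => fatoms p
  end.

Record structure : Type := mkStructure {
  dom : Type ;
  ifun : F -> list dom -> dom ;
  ipred : P -> list dom -> Prop }.

Fixpoint eval (M : structure) (v : nat -> dom M) (t : term) : dom M :=
  match t with
  | Var x => v x
  | Fn f ts => ifun M f (map (eval M v) ts)
  end.

Definition sat_atom (M : structure) (v : nat -> dom M) (a : atom) : Prop :=
  ipred M (fst a) (map (eval M v) (snd a)).

Definition upd (M : structure) (v : nat -> dom M) (x : nat) (d : dom M) : nat -> dom M :=
  fun y => if Nat.eqb y x then d else v y.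

Fixpoint holds (M : structure) (v : nat -> dom M) (phi : formula) : Prop :=
  match phi with
  | FAtom a => sat_atom M v a
  | FNot p => ~ holds M v p
  | FAnd p q => holds M v p /\ holds M v q
  | FEx x p => exists d : dom M, holds M (upd M v x d) p
  end.

Definition normal_structure (peq : P) (M : structure) : Prop :=
  inhabited (dom M) /\
  forall ds, ipred M peq ds <-> exists d1 d2, ds = [d1; d2] /\ d1 = d2.

Definition is_model (peq : P) (CT : formula -> Prop) (M : structure) : Prop :=
  normal_structure peq M /\ forall phi, CT phi -> forall v, holds M v phi.

Definition ct_consistent (peq : P) (CT : formula -> Prop) (cs : list atom) : Prop :=
  forall M, is_model peq CT M ->
    exists v : nat -> dom M, forall c, In c cs -> sat_atom M v c.

End Syntax.

Arguments Var {F}.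

Definition pred_closed {F P : Type} (S : atom F P -> Prop) : Prop :=
  forall p ts ts', length ts = length ts' -> S (p, ts) -> S (p, ts').

Record CABA (F P : Type) : Type := mkCABA {
  Lc : atom F P -> Prop ;
  Cs : atom F P -> Prop ;
  Rs : rule F P -> Prop ;
  CT : formula F P -> Prop ;
  peq : P ;
  As : atom F P -> Prop ;
  cp : P -> P                       (* contrary: contrary of p(t) is (cp p)(t) *)
}.

Arguments Lc {F P}. Arguments Cs {F P}. Arguments Rs {F P}. Arguments CT {F P}.
Arguments peq {F P}. Arguments As {F P}. Arguments cp {F P}.

Definition wf_CABA {F P : Type} (fw : CABA F P) : Prop :=
  (forall c, Cs fw c -> Lc fw c) /\
  (forall t1 t2, Cs fw (peq fw, [t1; t2])) /\
  (forall phi, CT fw phi -> forall a, In a (fatoms phi) -> Cs fw a) /\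
  (forall r, Rs fw r ->
     Lc fw (head r) /\ ~ Cs fw (head r) /\ (forall b, In b (body r) -> Lc fw b)) /\
  (forall r, Rs fw r ->
     (exists X0, snd (head r) = map Var X0 /\ NoDup X0) /\
     (forall b, In b (body r) -> ~ Cs fw b ->
        exists Xb, snd b = map Var Xb /\ NoDup Xb)) /\
  (exists a, As fw a) /\
  (forall a, As fw a -> Lc fw a /\ ~ Cs fw a) /\
  (forall r, Rs fw r -> ~ As fw (head r)) /\
  (forall p ts, As fw (p, ts) -> Lc fw (cp fw p, ts) /\ ~ Cs fw (cp fw p, ts)) /\
  pred_closed (Lc fw) /\ pred_closed (Cs fw) /\ pred_closed (As fw).

Definition consistent {F P : Type} (fw : CABA F P) (cs : list (atom F P)) : Prop :=
  ct_consistent (peq fw) (CT fw) cs.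

(* Finite sets are represented by lists, compared extensionally. *)
Definition same_set {T : Type} (l1 l2 : list T) : Prop := forall x, In x l1 <-> In x l2.

(* A [Node a r rho ch] is a non-leaf node labelled [a], expanded
   with the renamed copy [rename_rule rho r] of the rule [r]; a fact node has no
   children (its only child being "true"). *)
Inductive tree (F P : Type) : Type :=
| Leaf : atom F P -> tree F P
| Node : atom F P -> rule F P -> (nat -> nat) -> list (tree F P) -> tree F P.

Arguments Leaf {F P}. Arguments Node {F P}.

Definition label {F P : Type} (t : tree F P) : atom F P :=
  match t with Leaf a => a | Node a _ _ _ => a end.

Definition injective_ren (rho : nat -> nat) : Prop := forall x y, rho x = rho y -> x = y.

Fixpoint tree_ok {F P : Type} (fw : CABA F P) (t : tree F P) : Prop :=
  match t with
  | Leaf a => Cs fw a \/ As fw a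
  | Node a r rho ch =>
      Rs fw r /\ injective_ren rho /\
      (let r' := rename_rule rho r in
       exists X, snd (head r') = map Var X /\
         fst a = fst (head r') /\ length X = length (snd a) /\
         map label ch = map (subst_atom (combine X (snd a))) (body r')) /\
      (fix all (l : list (tree F P)) : Prop :=
         match l with [] => True | c :: l' => tree_ok fw c /\ all l' end) ch
  end.

Fixpoint copy_vars {F P : Type} (t : tree F P) : list (list nat) :=
  match t with
  | Leaf _ => []
  | Node _ r rho ch => vars_rule (rename_rule rho r) :: flat_map copy_vars ch
  end.

Fixpoint leaves {F P : Type} (t : tree F P) : list (atom F P) :=
  match t with
  | Leaf a => [a]
  | Node _ _ _ ch => flat_map leaves ch
  end.

Fixpoint rules_of {F P : Type} (t : tree F P) : list (rule F P) :=
  match t with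
  | Leaf _ => []
  | Node _ r _ ch => r :: flat_map rules_of ch
  end.

Definition renamed_apart {F P : Type} (t : tree F P) : Prop :=
  (forall i j, i <> j -> i < length (copy_vars t) -> j < length (copy_vars t) ->
     forall x, In x (nth i (copy_vars t) []) -> ~ In x (nth j (copy_vars t) [])) /\
  (forall vs, In vs (copy_vars t) -> forall x, In x vs -> ~ In x (vars_atom (label t))).

Definition tight_arg {F P : Type} (fw : CABA F P)
  (C A : list (atom F P)) (R : list (rule F P)) (s : atom F P) : Prop :=
  exists t : tree F P,
    tree_ok fw t /\ renamed_apart t /\ label t = s /\
    Lc fw s /\ ~ Cs fw s /\
    consistent fw C /\
    (forall x, In x C <-> In x (leaves t) /\ Cs fw x) /\
    (forall x, In x A <-> In x (leaves t) /\ As fw x) /\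
    same_set R (rules_of t).

Definition CArg {F P : Type} (fw : CABA F P)
  (C' A' : list (atom F P)) (R : list (rule F P)) (s' : atom F P) : Prop :=
  exists (C A : list (atom F P)) (s : atom F P) (th : subst F) (D : list (atom F P)),
    tight_arg fw C A R s /\ is_subst th /\ (forall d, In d D -> Cs fw d) /\
    same_set C' (map (subst_atom th) C ++ D) /\
    same_set A' (map (subst_atom th) A) /\
    s' = subst_atom th s /\ consistent fw C'.

Definition cinstance {F P : Type} (fw : CABA F P)
  (C A : list (atom F P)) (R : list (rule F P)) (s : atom F P)
  (C' A' : list (atom F P)) (s' : atom F P) : Prop :=
  exists (th : subst F) (D : list (atom F P)),
    is_subst th /\ (forall d, In d D -> Cs fw d) /\
    same_set C' (map (subst_atom th) C ++ D) /\
    same_set A' (map (subst_atom th) A) /\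
    s' = subst_atom th s /\ consistent fw C'.

From Stdlib Require Import List Arith.
Import ListNotations.

Set Implicit Arguments.

(* An instance (via th2, D2) of an instance (via th1, D1) of a tight argument is
   an instance of that same tight argument via the composite substitution and the
   extra constraints th2(D1) ++ D2.  The composite is tabulated on the finitely
   many variables of the tight argument, so that it is again a finite substitution
   with distinct domain variables; th2(D1) consists of constraints because the set
   of constraints is predicate closed. *)

Section Substitutions.
Variables F P : Type.

Fixpoint term_ind_nested (Q : term F -> Prop) (HV : forall x, Q (Var x))
  (HF : forall f ts, Forall Q ts -> Q (Fn f ts)) (t : term F) : Q t :=
  match t with
  | Var x => HV x
  | Fn f ts => HF f ts ((fix go (l : list (term F)) : Forall Q l :=
       match l with
       | [] => @Forall_nil _ Q
       | u :: l' => @Forall_cons _ Q u l' (term_ind_nested HV HF u) (go l')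
       end) ts)
  end.

Definition tabulate (g : nat -> term F) (V : list nat) : subst F :=
  map (fun y => (y, g y)) V.

Definition compose_on (V : list nat) (th1 th2 : subst F) : subst F :=
  tabulate (fun y => subst_term th2 (lookup th1 y)) V.

Lemma is_subst_tabulate (g : nat -> term F) V : NoDup V -> is_subst (tabulate g V).
Proof.
  intros HV. unfold is_subst, tabulate. rewrite map_map, map_id. exact HV.
Qed.

Lemma lookup_tabulate (g : nat -> term F) V x : In x V -> lookup (tabulate g V) x = g x.
Proof.
  induction V as [|y V IH]; simpl; [tauto|].
  intros [->|Hx]; [now rewrite Nat.eqb_refl|].
  destruct (Nat.eqb_spec x y) as [->|_]; auto.
Qed.

Lemma subst_term_compose_on V th1 th2 t :
  incl (vars_term t) V ->
  subst_term (compose_on V th1 th2) t = subst_term th2 (subst_term th1 t).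
Proof.
  induction t as [x|f ts IH] using term_ind_nested; simpl; intros Hincl.
  - apply lookup_tabulate, Hincl. now left.
  - f_equal. rewrite map_map. apply map_ext_in. intros u Hu.
    rewrite Forall_forall in IH. apply IH; [exact Hu|].
    intros y Hy. apply Hincl, in_flat_map. eauto.
Qed.

Lemma subst_atom_compose_on V th1 th2 (a : atom F P) :
  incl (vars_atom a) V ->
  subst_atom (compose_on V th1 th2) a = subst_atom th2 (subst_atom th1 a).
Proof.
  intros Hincl. unfold subst_atom; simpl. f_equal. rewrite map_map.
  apply map_ext_in. intros u Hu. apply subst_term_compose_on.
  intros y Hy. apply Hincl, in_flat_map. eauto.
Qed.

Lemma map_subst_atom_compose_on V th1 th2 (l : list (atom F P)) :
  incl (flat_map (@vars_atom F P) l) V ->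
  map (subst_atom (compose_on V th1 th2)) l = map (subst_atom th2) (map (subst_atom th1) l).
Proof.
  intros Hincl. rewrite map_map. apply map_ext_in. intros a Ha.
  apply subst_atom_compose_on. intros y Hy. apply Hincl, in_flat_map. eauto.
Qed.

Lemma pred_closed_subst_atom (S : atom F P -> Prop) th a :
  pred_closed S -> S a -> S (subst_atom th a).
Proof.
  destruct a as [p ts]. intros HS. apply HS. unfold subst_atom; simpl.
  now rewrite length_map.
Qed.

End Substitutions.

Section SameSet.
Variable T : Type.

Lemma same_set_refl (l : list T) : same_set l l.
Proof. intro; tauto. Qed.

Lemma same_set_trans (l1 l2 l3 : list T) :
  same_set l1 l2 -> same_set l2 l3 -> same_set l1 l3.
Proof. intros H12 H23 x. rewrite (H12 x). apply H23. Qed.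

Lemma same_set_app (l1 l2 m1 m2 : list T) :
  same_set l1 l2 -> same_set m1 m2 -> same_set (l1 ++ m1) (l2 ++ m2).
Proof. intros Hl Hm x. rewrite !in_app_iff, (Hl x), (Hm x). tauto. Qed.

Lemma same_set_map {U : Type} (f : T -> U) (l1 l2 : list T) :
  same_set l1 l2 -> same_set (map f l1) (map f l2).
Proof.
  intros H x. rewrite !in_map_iff.
  split; intros [y [<- Hy]]; exists y; split; auto; apply H; exact Hy.
Qed.

End SameSet.

Lemma wf_CABA_pred_closed_Cs {F P : Type} (fw : CABA F P) :
  wf_CABA fw -> pred_closed (Cs fw).
Proof. intros (_&_&_&_&_&_&_&_&_&_&HCs&_). exact HCs. Qed.

Lemma CArg_tight_cinstance {F P : Type} (fw : CABA F P) C' A' R s' :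
  CArg fw C' A' R s' <->
  exists C A s, tight_arg fw C A R s /\ cinstance fw C A R s C' A' s'.
Proof.
  split.
  - intros (C & A & s & th & D & Ht & Hinst). exists C, A, s.
    split; [exact Ht|]. exists th, D. exact Hinst.
  - intros (C & A & s & Ht & th & D & Hinst). exists C, A, s, th, D. auto.
Qed.

Lemma cinstance_trans {F P : Type} (fw : CABA F P) :
  pred_closed (Cs fw) ->
  forall C0 A0 R s0 C A s C' A' s',
  cinstance fw C0 A0 R s0 C A s -> cinstance fw C A R s C' A' s' ->
  cinstance fw C0 A0 R s0 C' A' s'.
Proof.
  intros HCs C0 A0 R s0 C A s C' A' s'
    (th1 & D1 & _ & HD1 & HC & HA & Hs & _) (th2 & D2 & _ & HD2 & HC' & HA' & Hs' & Hcons').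
  set (V := nodup Nat.eq_dec (flat_map (@vars_atom F P) (s0 :: C0 ++ A0))).
  assert (Hcomp : forall l, incl l (s0 :: C0 ++ A0) ->
            map (subst_atom (compose_on V th1 th2)) l
            = map (subst_atom th2) (map (subst_atom th1) l)).
  { intros l Hl. apply map_subst_atom_compose_on. intros y Hy.
    apply in_flat_map in Hy as (a & Ha & Hy). apply nodup_In, in_flat_map. eauto. }
  exists (compose_on V th1 th2), (map (subst_atom th2) D1 ++ D2).
  split; [apply is_subst_tabulate, NoDup_nodup|].
  split.
  { intros d Hd. apply in_app_iff in Hd as [Hd|Hd]; [|auto].
    apply in_map_iff in Hd as (e & <- & He).
    apply pred_closed_subst_atom; auto. }
  split.
  { rewrite Hcomp, app_assoc, <- map_app by (intros a Ha; right; apply in_app_iff; auto).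
    eapply same_set_trans; [exact HC'|].
    apply same_set_app; [apply same_set_map, HC|apply same_set_refl]. }
  split.
  { rewrite Hcomp by (intros a Ha; right; apply in_app_iff; auto).
    eapply same_set_trans; [exact HA'|]. apply same_set_map, HA. }
  split; [|exact Hcons'].
  assert (Hs0 : incl [s0] (s0 :: C0 ++ A0)) by (intros a [<-|[]]; now left).
  rewrite Hs', Hs. symmetry. exact (f_equal (hd s0) (Hcomp _ Hs0)).
Qed.

Theorem propositionB1 (F P : Type) (fw : CABA F P) (Hwf : wf_CABA fw)
  (C A : list (atom F P)) (R : list (rule F P)) (s : atom F P)
  (C' A' : list (atom F P)) (s' : atom F P) :
  CArg fw C A R s -> cinstance fw C A R s C' A' s' -> CArg fw C' A' R s'.
Proof.
  rewrite !CArg_tight_cinstance.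
  intros (C0 & A0 & s0 & Htight & Hinst) Hinst'.
  exists C0, A0, s0. split; [exact Htight|].
  exact (cinstance_trans (wf_CABA_pred_closed_Cs Hwf) Hinst Hinst').
Qed.
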